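(* Let $f:\mathbb{R}^n\to\mathbb{R}$ be convex, let $\nu\in\mathbb{N}$ and $k\in\{1,\ldots,\nu\}$. Write states as $x=(x^1,\ldots,x^\nu)$ with $x^j\in\mathbb{R}^n$. (i) Consider the system with state set $X=(\mathbb{R}^n)^\nu$ and input $u_t\in\mathbb{R}^n$, $$x_{t+1}=(x_t^2,\ldots,x_t^\nu,u_t),\qquad y_t=u_t-x_t^k ,$$ (equivalently $x_{t+1}=A_\psi x_t+B_\psi u_t$, $y_t=C_\psi x_t+u_t$ with $A_\psi=A_\nu\otimes I_n$, $B_\psi=e_\nu\otimes I_n$, $C_\psi=(-e_k^\top)\otimes I_n$, where $A_\nu\in\mathbb{R}^{\nu\times\nu}$ is the upper Jordan block with eigenvalue zero). This system is dissipative with respect to the multi-valued supply rate $S(u,y)=\partial f(u)^\top y$ with storage function $V_k(x)=\sum_{j=k}^\nu f(x^j)$; that is, for every trajectory, all $t_1\le t_2$ in $\mathbb{N}_0$ and all $g_t\in\partial f(u_t)$, $V_k(x_{t_2})\le V_k(x_{t_1})+\sum_{t=t_1}^{t_2-1}g_t^\top y_t$. (ii) Let $X_{\partial f}:=\{z\in\mathbb{R}^n: z\in\partial f(u)\text{ for some }u\in\mathbb{R}^n\}$ and $X^*:=(X_{\partial f})^\nu$. Consider the system with state set $X^*$ and input $u_t\in\mathbb{R}^n$, $$x_{t+1}=(x_t^2,\ldots,x_t^\nu,v_t),\qquad y_t=v_t-x_t^k,\qquad v_t\in\partial f(u_t).$$ This system is passive (dissipative with respect to $S(u,y)=u^\top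 y$) on $X^*$ with storage function $V_k^*(x)=\sum_{j=k}^\nu f^*(x^j)$; that is, for all such trajectories with $x_t\in X^*$ and all $t_1\le t_2$ in $\mathbb{N}_0$, $V_k^*(x_{t_2})\le V_k^*(x_{t_1})+\sum_{t=t_1}^{t_2-1}u_t^\top y_t$.
   Context: $\partial f$ is the subdifferential of $f$; $f^*(x)=\sup_{w\in\mathbb{R}^n}[x^\top w-f(w)]$ is the Fenchel conjugate, finite on $X_{\partial f}$. $e_j$ denotes the $j$-th standard unit vector of $\mathbb{R}^\nu$, $\otimes$ the Kronecker product, $I_n$ the $n\times n$ identity matrix. *)

From HB Require Import structures.
From mathcomp Require Import all_boot all_order all_algebra.
From mathcomp Require Import boolp classical_sets reals.
Set Implicit Arguments. Unset Strict Implicit. Unset Printing Implicit Defensive.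
Import Order.TTheory GRing.Theory Num.Theory.
Local Open Scope ring_scope.
Local Open Scope classical_set_scope.

Definition dotv (R : realType) (n : nat) (a b : 'rV[R]_n) : R :=
  \sum_(i < n) a 0 i * b 0 i.

Definition convex_fun (R : realType) (n : nat) (f : 'rV[R]_n -> R) : Prop :=
  forall (a b : 'rV[R]_n) (t : R), 0 <= t -> t <= 1 ->
    f (t *: a + (1 - t) *: b) <= t * f a + (1 - t) * f b.

Definition subdiff (R : realType) (n : nat) (f : 'rV[R]_n -> R) (u : 'rV[R]_n)
  : set 'rV[R]_n :=
  [set g | forall w : 'rV[R]_n, f u + dotv g (w - u) <= f w].

Definition Xsubdiff (R : realType) (n : nat) (f : 'rV[R]_n -> R) : set 'rV[R]_n :=
  [set z | exists u, subdiff f u z].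

(* Fenchel conjugate f^*(x) = sup_w [x^T w - f w] (real supremum; it is
   finite, hence the true supremum, on Xsubdiff f). *)
Definition fconj (R : realType) (n : nat) (f : 'rV[R]_n -> R) (x : 'rV[R]_n) : R :=
  sup (range (fun w => dotv x w - f w)).

From HB Require Import structures.
From mathcomp Require Import all_boot all_order all_algebra.
From mathcomp Require Import boolp classical_sets reals.
From mathcomp Require Import lra.
Set Implicit Arguments. Unset Strict Implicit. Unset Printing Implicit Defensive.
Import Order.TTheory GRing.Theory Num.Theory.
Local Open Scope ring_scope.
Local Open Scope classical_set_scope.

(* Shifting the register drops x^k from the window {k, ..., nu} and appends the
   new entry, so one step changes a storage sum_{j >= k} phi(x^j) by
   phi(new) - phi(x^k).  For phi = f this is at most g^T (u - x^k) by the
   subgradient inequality at u; for phi = f^* it is at most u^T (v - x^k),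
   because the Fenchel-Young inequality is an equality at v in \partial f(u),
   i.e. u is a subgradient of f^* at v on X_{\partial f}.  Summing over
   t1 <= t < t2 telescopes. *)

Lemma ler_telescope (R : numDomainType) (a b : nat -> R) t1 t2 :
  (t1 <= t2)%N ->
  (forall t, (t1 <= t < t2)%N -> a t.+1 <= a t + b t) ->
  a t2 <= a t1 + \sum_(t1 <= t < t2) b t.
Proof.
elim: t2 => [|t2 IH]; first by rewrite leqn0 => /eqP-> _; rewrite big_geq ?addr0.
rewrite leq_eqVlt => /orP[/eqP-> _|]; first by rewrite big_geq ?addr0.
rewrite ltnS => le12 step; rewrite big_nat_recr //= addrA.
apply: le_trans (step t2 _) _; first by rewrite le12 ltnSn.
rewrite lerD2r; apply: IH => // t /andP[le1 lt2]; apply: step.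
by rewrite le1 ltnW.
Qed.

Lemma big_geq_shift (V : zmodType) nu (k : 'I_nu) (F G : 'I_nu -> V) (c : V) :
  (forall i j : 'I_nu, val j = (val i).+1 -> G i = F j) ->
  (forall i : 'I_nu, val i = nu.-1 -> G i = c) ->
  \sum_(j < nu | (k <= j)%N) G j = \sum_(j < nu | (k <= j)%N) F j - F k + c.
Proof.
case: nu k F G => [[//]|m] k F G GF Gc.
have big_geq_nat (H : 'I_m.+1 -> V) :
    \sum_(j < m.+1 | (k <= j)%N) H j = \sum_(k <= j < m.+1) H (inord j).
  by rewrite big_geq_mkord; apply: eq_bigr => i _; rewrite inord_val.
have lekm : (k <= m)%N by rewrite -ltnS.
rewrite !big_geq_nat big_nat_recr //= (big_ltn (ltn_ord k)) inord_val.
rewrite (Gc (inord m)); last exact: inordK.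
rewrite big_add1 /= (addrC (F k)) addrK.
congr (_ + _); apply: eq_big_nat => j /andP[_ ltjm].
by apply: GF; rewrite /= !inordK // (leq_trans ltjm).
Qed.

Section ShiftRegister.

Variables (T : Type) (R : numDomainType) (nu : nat) (k : 'I_nu).
Variables (phi : T -> R) (x : nat -> 'I_nu -> T) (w : nat -> T).
Hypothesis x_shift : forall t (i j : 'I_nu), val j = (val i).+1 -> x t.+1 i = x t j.
Hypothesis x_last : forall t (i : 'I_nu), val i = nu.-1 -> x t.+1 i = w t.

Let storage t := \sum_(j < nu | (k <= j)%N) phi (x t j).

Lemma storage_shift t : storage t.+1 = storage t - phi (x t k) + phi (w t).
Proof. by apply: big_geq_shift => [i j /x_shift|i /x_last] ->. Qed.

Lemma shift_register_dissipative (s : nat -> R) t1 t2 :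
  (t1 <= t2)%N ->
  (forall t, (t1 <= t < t2)%N -> phi (w t) - phi (x t k) <= s t) ->
  storage t2 <= storage t1 + \sum_(t1 <= t < t2) s t.
Proof.
move=> le12 supply; apply: ler_telescope => // t /supply.
by rewrite storage_shift addrAC -addrA lerD2l.
Qed.

End ShiftRegister.

Section Subgradients.

Variables (R : realType) (n : nat) (f : 'rV[R]_n -> R).

Lemma dotvC (a b : 'rV[R]_n) : dotv a b = dotv b a.
Proof. by apply: eq_bigr => i _; rewrite mulrC. Qed.

Lemma dotvBr (a b c : 'rV[R]_n) : dotv a (b - c) = dotv a b - dotv a c.
Proof. by rewrite /dotv -sumrB; apply: eq_bigr => i _; rewrite !mxE mulrBr. Qed.

Lemma subdiff_subr_le u g w : subdiff f u g -> f u - f w <= dotv g (u - w).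
Proof. by move=> /(_ w); rewrite !dotvBr; lra. Qed.

Lemma subdiff_maximizer u z w : subdiff f u z -> dotv z w - f w <= dotv z u - f u.
Proof. by move=> /(_ w); rewrite dotvBr; lra. Qed.

Lemma fconj_ge z w : Xsubdiff f z -> dotv z w - f w <= fconj f z.
Proof.
move=> [u zu]; apply: sup_upper_bound; last by exists w.
split; first by exists (dotv z w - f w), w.
by exists (dotv z u - f u) => _ [y _ <-]; exact: subdiff_maximizer.
Qed.

Lemma fconj_subdiff u z : subdiff f u z -> fconj f z = dotv z u - f u.
Proof.
move=> zu; apply/le_anti/andP; split; last by apply: fconj_ge; exists u.
by apply: ge_sup => [|_ [y _ <-]]; [exists (dotv z u - f u), u | exact: subdiff_maximizer].
Qed.

Lemma fconj_subr_le u v z :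
  subdiff f u v -> Xsubdiff f z -> fconj f v - fconj f z <= dotv u (v - z).
Proof.
move=> vu zX; have := fconj_ge u zX.
by rewrite (fconj_subdiff vu) dotvBr (dotvC u v) (dotvC u z); lra.
Qed.

End Subgradients.

Theorem corollary6 (R : realType) (n nu : nat) (f : 'rV[R]_n -> R)
  (hf : convex_fun f) (k : 'I_nu) :
  (* (i) *)
  (forall (x : nat -> 'I_nu -> 'rV[R]_n) (u : nat -> 'rV[R]_n),
     (forall t (i j : 'I_nu), val j = (val i).+1 -> x t.+1 i = x t j) ->
     (forall t (i : 'I_nu), val i = nu.-1 -> x t.+1 i = u t) ->
     forall (t1 t2 : nat), (t1 <= t2)%N ->
     forall g : nat -> 'rV[R]_n,
       (forall t, (t1 <= t < t2)%N -> subdiff f (u t) (g t)) ->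
       \sum_(j < nu | (k <= j)%N) f (x t2 j)
         <= \sum_(j < nu | (k <= j)%N) f (x t1 j)
            + \sum_(t1 <= t < t2) dotv (g t) (u t - x t k))
  /\
  (* (ii) *)
  (forall (x : nat -> 'I_nu -> 'rV[R]_n) (u v : nat -> 'rV[R]_n),
     (forall t (j : 'I_nu), Xsubdiff f (x t j)) ->
     (forall t, subdiff f (u t) (v t)) ->
     (forall t (i j : 'I_nu), val j = (val i).+1 -> x t.+1 i = x t j) ->
     (forall t (i : 'I_nu), val i = nu.-1 -> x t.+1 i = v t) ->
     forall (t1 t2 : nat), (t1 <= t2)%N ->
       \sum_(j < nu | (k <= j)%N) fconj f (x t2 j)
         <= \sum_(j < nu | (k <= j)%N) fconj f (x t1 j)
            + \sum_(t1 <= t < t2) dotv (u t) (v t - x t k)).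
Proof.
split.
  move=> x u x_shift x_last t1 t2 le12 g g_sub.
  apply: (shift_register_dissipative x_shift x_last) => // t /g_sub.
  exact: subdiff_subr_le.
move=> x u v x_dom v_sub x_shift x_last t1 t2 le12.
apply: (shift_register_dissipative x_shift x_last) => // t _.
exact: fconj_subr_le.
Qed.
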